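(* Let $G$ and $H$ be two uncountable groups of the same regular cardinality $\gamma$. Then the balleans $\mathcal{B}(G)$ and $\mathcal{B}(H)$ are asymorphic.
   Context: For an infinite group $G$ with identity $e$, $\mathcal{B}(G)=(G,\mathcal{F},B)$ where $\mathcal{F}=\{A\subseteq G: e\in A, |A|<|G|\}$ and $B(g,A)=gA$. For balleans $(X_1,P_1,B_1)$, $(X_2,P_2,B_2)$ (sets with families of balls $B(x,\alpha)\subseteq X$ indexed by $x\in X,\alpha\in P$), a map $f:X_1\to X_2$ is a $\prec$-mapping if for every $\alpha\in P_1$ there is $\beta\in P_2$ with $f(B_1(x,\alpha))\subseteq B_2(f(x),\beta)$ for all $x\in X_1$; a bijection $f$ is an asymorphism if $f$ and $f^{-1}$ are $\prec$-mappings, and the balleans are then called asymorphic. *)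

From Stdlib Require Import Classical.

Set Implicit Arguments.

Record Group := {
  gcar :> Type;
  gmul : gcar -> gcar -> gcar;
  ginv : gcar -> gcar;
  gone : gcar;
  gmulA : forall x y z, gmul x (gmul y z) = gmul (gmul x y) z;
  gmul1l : forall x, gmul gone x = x;
  gmul1r : forall x, gmul x gone = x;
  gmulVl : forall x, gmul (ginv x) x = gone;
  gmulVr : forall x, gmul x (ginv x) = gone
}.

Definition card_le (A B : Type) : Prop :=
  exists f : A -> B, forall x y, f x = f y -> x = y.
Definition card_lt (A B : Type) : Prop := card_le A B /\ ~ card_le B A.
Definition card_eq (A B : Type) : Prop :=
  exists (f : A -> B) (g : B -> A),
    (forall x, g (f x) = x) /\ (forall y, f (g y) = y).

Definition uncountable (X : Type) : Prop := ~ card_le X nat.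

(** |X| is an infinite regular cardinal: X is infinite and X is not the
    union of fewer than |X| subsets each of cardinality less than |X|
    (i.e. cf |X| = |X|). *)
Definition regular_card (X : Type) : Prop :=
  card_le nat X /\
  forall (I : Type) (A : I -> X -> Prop),
    card_lt I X ->
    (forall i, card_lt {x : X | A i x} X) ->
    exists x : X, forall i, ~ A i x.

Record ballean := {
  bsupp : Type;
  bradii : Type;
  bball : bsupp -> bradii -> bsupp -> Prop  (* bball x a y  <->  y \in B(x,a) *)
}.

Definition prec_mapping (X1 X2 : ballean) (f : bsupp X1 -> bsupp X2) : Prop :=
  forall a : bradii X1, exists b : bradii X2,
    forall x y, bball X1 x a y -> bball X2 (f x) b (f y).

Definition asymorphism (X1 X2 : ballean) (f : bsupp X1 -> bsupp X2) : Prop :=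
  exists g : bsupp X2 -> bsupp X1,
    (forall x, g (f x) = x) /\ (forall y, f (g y) = y) /\
    prec_mapping X1 X2 f /\ prec_mapping X2 X1 g.

Definition asymorphic (X1 X2 : ballean) : Prop :=
  exists f, asymorphism X1 X2 f.

Definition group_radius (G : Group) : Type :=
  { A : G -> Prop | A (gone G) /\ card_lt {x : G | A x} G }.

Definition ballean_of_group (G : Group) : ballean :=
  {| bsupp := gcar G;
     bradii := group_radius G;
     bball := fun g A y => exists a, proj1_sig A a /\ y = gmul G g a |}.

From Stdlib Require Import ClassicalEpsilon.
From mathcomp Require Import ssreflect ssrfun ssrbool eqtype ssrnat.
From mathcomp Require Import boolp classical_sets.
From mathcomp Require cardinality wochoice.

(* Fix well-orderings of [G] and [H] in which every proper initial segment is
   small (of cardinality below gamma).  By Zorn's lemma take a maximal stage: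
   a chain of levels [(K, L)] of small subgroups together with a bijection [f]
   between their unions [K*] and [L*] such that, on every level, [x] and [y]
   lie in the same [K]-coset iff [f x] and [f y] lie in the same [L]-coset.
   Requiring each level to contain the least element missed by the previous
   ones makes [K*] small by regularity unless it is all of [G].  If [K*] and
   [L*] are small, close them up to small subgroups [K' > K*] and [L' > L*]
   with equally many cosets of [K*] and [L*]; matching the cosets by a
   bijection and extending [f] along each coset gives a larger stage.  So the
   maximal stage covers [G] and [H], and since every small radius lies in some
   level [K], [f] maps [gA] into [f(g) L]. *)

Set Implicit Arguments.
Unset Strict Implicit.

Local Open Scope classical_set_scope.

(** * Cardinalities and small sets *)

Lemma sig_eq (X : Type) (S : X -> Prop) (a b : {x | S x}) :
  proj1_sig a = proj1_sig b -> a = b.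
Proof. by apply: eq_sig_hprop => x p q; apply: Prop_irrelevance. Qed.

Lemma card_le_refl (A : Type) : card_le A A.
Proof. by exists id. Qed.

Lemma card_le_trans (A B C : Type) : card_le A B -> card_le B C -> card_le A C.
Proof. by move=> [f f_inj] [g g_inj]; exists (g \o f) => x y /g_inj/f_inj. Qed.

Lemma card_le_lt_trans (A B C : Type) : card_le A B -> card_lt B C -> card_lt A C.
Proof.
move=> AB [BC CB]; split; first exact: card_le_trans AB BC.
by move=> CA; apply: CB; apply: card_le_trans CA AB.
Qed.

Lemma card_eq_le (A B : Type) : card_eq A B -> card_le A B.
Proof. by move=> [f [g [fK _]]]; exists f => x y /(congr1 g); rewrite !fK. Qed.

Lemma card_eq_sym (A B : Type) : card_eq A B -> card_eq B A.
Proof. by move=> [f [g [fK gK]]]; exists g, f. Qed.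

Lemma card_le_setT (A B : Type) :
  card_le A B -> cardinality.card_le [set: A] [set: B].
Proof.
move=> [f f_inj]; apply/cardinality.card_leP/cardinality.injfunPex.
exists (fun a => SigSub (mem_set (I : [set: B] (f (val a))))) => //.
by move=> a b _ _ /(congr1 val)/f_inj/val_inj.
Qed.

Lemma card_eq_of_le (A B : Type) : card_le A B -> card_le B A -> card_eq A B.
Proof.
move=> AB BA.
have /cardinality.card_bijP[f [g fK gK]] :=
  cardinality.Cantor_Bernstein (card_le_setT AB) (card_le_setT BA).
exists (fun a => val (f (SigSub (mem_set (I : [set: A] a))))).
exists (fun b => val (g (SigSub (mem_set (I : [set: B] b))))).
split=> [a|b].
- by rewrite (_ : SigSub _ = f (SigSub (mem_set (I : [set: A] a)))) ?fK //; apply: val_inj.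
- by rewrite (_ : SigSub _ = g (SigSub (mem_set (I : [set: B] b)))) ?gK //; apply: val_inj.
Qed.

Lemma card_eq_sig_bij (X Y : Type) (S : set X) (T : set Y) (y0 : Y) :
  card_eq {x | S x} {y | T y} -> exists f : X -> Y,
    [/\ forall x, S x -> T (f x), {in S &, injective f}
      & forall y, T y -> exists2 x, S x & f x = y].
Proof.
move=> [s [t [tK sK]]].
exists (fun x => if pselect (S x) is left Sx then proj1_sig (s (exist _ x Sx)) else y0).
split.
- by move=> x Sx; case: pselect => // Sx'; apply: proj2_sig.
- move=> x y /set_mem Sx /set_mem Sy; case: pselect => // Sx'; case: pselect => // Sy'.
  by move=> /sig_eq /(congr1 t); rewrite !tK => /(congr1 (@proj1_sig _ _)).
- move=> y Ty; exists (proj1_sig (t (exist _ y Ty))); first exact: proj2_sig.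
  case: pselect => [Sx|]; last by case; apply: proj2_sig.
  by rewrite (_ : exist _ _ Sx = t (exist _ y Ty)) ?sK //; apply: sig_eq.
Qed.

(* The radii of [ballean_of_group G] are exactly the small sets containing 1. *)
Definition small (X : Type) (S : set X) : Prop := card_lt {x | S x} X.

Section Small.
Variable X : Type.
Implicit Types S T : set X.

Lemma card_le_sig S : card_le {x | S x} X.
Proof. by exists (@proj1_sig _ _); apply: sig_eq. Qed.

Lemma small_inj (Y : Type) S (T : set Y) (f : X -> Y) :
  {in S &, injective f} -> (forall x, S x -> T (f x)) ->
  small T -> card_le Y X -> small S.
Proof.
move=> f_inj fST [_ TY] YX; split; first exact: card_le_sig.
move=> XS; apply: TY; apply: card_le_trans YX (card_le_trans XS _).
exists (fun a => exist _ (f (proj1_sig a)) (fST _ (proj2_sig a))).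
move=> [a Sa] [b Sb] /(congr1 (@proj1_sig _ _)) /= fab.
by apply: sig_eq; apply: f_inj; rewrite ?inE.
Qed.

Lemma small_subset S T : S `<=` T -> small T -> small S.
Proof. by move=> ST Ts; apply: (small_inj (f := id)) ST Ts (card_le_refl X). Qed.

Lemma not_small_card_le S : ~ small S -> card_le X {x | S x}.
Proof. by move=> NS; apply: contrapT => XS; apply: NS; split=> //; apply: card_le_sig. Qed.

Lemma setT_not_small : ~ small [set: X].
Proof. by move=> [_]; apply; exists (fun x => exist _ x I) => x y /(congr1 (@proj1_sig _ _)). Qed.

Lemma small_not_full S : small S -> exists x, ~ S x.
Proof.
move=> Ss; apply/existsNP => full; apply: setT_not_small.
exact: small_subset (fun x _ => full x) Ss.
Qed.

Hypothesis X_regular : regular_card X.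
Hypothesis X_uncountable : uncountable X.

Lemma card_lt_nat : card_lt nat X.
Proof. by split; [case: X_regular|]. Qed.

Lemma small_bigcup (I : Type) (A : I -> set X) :
  card_lt I X -> (forall i, small (A i)) -> small (fun x => exists i, A i x).
Proof.
move=> IX As; split; first exact: card_le_sig.
move=> [j j_inj].
have [i|x Ax] := X_regular.2 I (fun i x => A i (proj1_sig (j x))) IX.
  apply: (small_inj (f := fun x => proj1_sig (j x))) (As i) (card_le_refl X) => //.
  by move=> a b _ _ /sig_eq /j_inj.
by have [i] := proj2_sig (j x); apply: Ax.
Qed.

Lemma small_set1 (x : X) : small [set x].
Proof.
apply: card_le_lt_trans card_lt_nat; exists (fun _ => 0) => a b _.
by apply: sig_eq; rewrite (proj2_sig a) (proj2_sig b).
Qed.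

Lemma small_setU S T : small S -> small T -> small (S `|` T).
Proof.
move=> Ss Ts; have two : card_lt bool X.
  by apply: card_le_lt_trans card_lt_nat; exists (fun b : bool => if b then 1 else 0) => -[] [].
apply: small_subset (small_bigcup (A := fun b : bool => if b then S else T) two _).
  by move=> x [Sx|Tx]; [exists true|exists false].
by case.
Qed.

Lemma small_image (Y : Type) (f : Y -> X) (S : set Y) :
  card_lt {y | S y} X -> small (f @` S).
Proof.
move=> SX; apply: small_subset
  (small_bigcup (A := fun y : {y | S y} => [set f (proj1_sig y)]) SX _).
  by move=> _ [y Sy <-]; exists (exist _ y Sy).
by move=> y; apply: small_set1.
Qed.

End Small.

Lemma regular_card_eq (X Y : Type) : card_eq X Y -> regular_card X -> regular_card Y.
Proof.
move=> [f [g [fK gK]]] [natX regX].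
have YX : card_le Y X by exists g => x y /(congr1 f); rewrite !gK.
split; first by apply: card_le_trans natX _; exists f => x y /(congr1 g); rewrite !fK.
move=> I A [IY YI] As.
have [|i|x Ax] := regX I (fun i x => A i (f x)); last by exists (f x).
  split; [apply: card_le_trans IY YX|move=> XI; apply: YI].
  by apply: card_le_trans XI; exists g => x y /(congr1 f); rewrite !gK.
by apply: (small_inj (f := f)) (As i) YX => // a b _ _ /(congr1 g); rewrite !fK.
Qed.

(** * Well-orderings and towers *)

Record well_ordering (X : Type) (W : X -> X -> Prop) : Prop := {
  wo_least : forall P : set X, (exists x, P x) -> exists2 z, P z & forall y, P y -> W z y;
  wo_antisym : forall x y, W x y -> W y x -> x = y }.

Lemma exists_well_ordering (T : Type) : exists W : T -> T -> Prop, well_ordering W.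
Proof.
elim/Peq: T => T; have [R woR] := wochoice.well_ordering_principle T.
have least (A : {pred T}) x : x \in A -> exists2 z, z \in A & forall y, y \in A -> R z y.
  by move=> xA; have [z [[zA zlow] _]] := woR A (ex_intro _ x xA); exists z.
have R_refl x : R x x.
  by have [z /eqP-> zlow] := least (pred1 x) x (eqxx x); apply: zlow; rewrite inE.
exists (fun x y => R x y); split.
  move=> P [x Px]; have [|z /asboolP Pz zlow] := least [pred y | `[< P y >]] x.
    by apply/asboolP.
  by exists z => // y Py; apply/zlow/asboolP.
move=> x y Rxy Ryx; have x2 : x \in pred2 x y by rewrite inE eqxx.
have [z [_ zuniq]] := woR (pred2 x y) (ex_intro _ x x2).
rewrite -(zuniq x) ?(zuniq y) //; split; rewrite ?inE ?eqxx ?orbT //.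
- by move=> w; rewrite inE => /orP[]/eqP->.
- by move=> w; rewrite inE => /orP[]/eqP->.
Qed.

Definition least_outside (X : Type) (W : X -> X -> Prop) (K : set X) (x : X) :=
  ~ K x /\ forall z, ~ K z -> W x z.

Lemma least_outside_exists (X : Type) (W : X -> X -> Prop) (K : set X) (g : X) :
  well_ordering W -> ~ K g -> exists x, least_outside W K x.
Proof.
by move=> Wwo Kg; have [x Kx xlow] := wo_least Wwo (ex_intro (fun z => ~ K z) g Kg); exists x.
Qed.

Lemma least_outside_unique (X : Type) (W : X -> X -> Prop) (K : set X) (x y : X) :
  well_ordering W -> least_outside W K x -> least_outside W K y -> x = y.
Proof. by move=> Wwo [Kx xlow] [Ky ylow]; exact: (wo_antisym Wwo (xlow y Ky) (ylow x Kx)). Qed.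

(* Its order type is the initial ordinal of [|X|]. *)
Definition initial_ordering (X : Type) (W : X -> X -> Prop) :=
  well_ordering W /\ forall y, small (fun x => W x y).

Lemma exists_initial_ordering (X : Type) :
  regular_card X -> uncountable X -> exists W : X -> X -> Prop, initial_ordering W.
Proof.
move=> Xreg Xunc; have [W0 W0wo] := exists_well_ordering X.
have [[c0 Nc0]|allS] := pselect (exists c, ~ small (fun z => W0 z c)); last first.
  by exists W0; split=> // y; apply: contrapT => Ny; apply: allS; exists y.
(* Otherwise transport [W0] to the first initial segment that is not small. *)
have [c Nc cmin] := wo_least W0wo (ex_intro (fun c => ~ small (W0^~ c)) c0 Nc0).
have Nbelow : ~ small (fun z => W0 z c /\ z <> c).
  move=> Sb; apply: Nc; apply: small_subset (small_setU Xreg Xunc Sb (small_set1 Xreg Xunc c)).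
  by move=> z Wzc; have [->|] := pselect (z = c); [right|left].
have below_small z : W0 z c /\ z <> c -> small (fun y => W0 y z).
  by move=> [Wzc zc]; apply: contrapT => Nz; apply: zc; exact: (wo_antisym W0wo Wzc (cmin z Nz)).
have [j j_inj] := not_small_card_le Nbelow.
exists (fun x y => W0 (proj1_sig (j x)) (proj1_sig (j y))); split; first split.
- move=> P [x Px].
  have [_ [x0 [Px0 <-]] zlow] := wo_least W0wo
    (ex_intro (fun z => exists x, P x /\ proj1_sig (j x) = z) _ (ex_intro _ x (conj Px erefl))).
  by exists x0 => // y Py; apply: zlow; exists y.
- by move=> x y Wxy Wyx; apply/j_inj/sig_eq/(wo_antisym W0wo).
- move=> g; apply: (small_inj (f := fun x => proj1_sig (j x)))
    (below_small _ (proj2_sig (j g))) (card_le_refl X) => //.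
  by move=> a b _ _ /sig_eq/j_inj.
Qed.

Section Towers.
Variables (X : Type) (W : X -> X -> Prop).

(* Stands for an increasing chain indexed by the ordinals below [|X|]. *)
Record tower (F : set (set X)) : Prop := {
  tower_small : forall K, F K -> small K;
  tower_chain : total_on F subset;
  tower_progress : forall K K2 x, F K -> F K2 -> K `<` K2 ->
    least_outside W K x -> K2 x }.

Hypothesis X_regular : regular_card X.

(* Distinct members have distinct least outside elements, all below [g]. *)
Lemma tower_union_small (F : set (set X)) (g : X) :
  initial_ordering W -> tower F -> ~ (\bigcup_(K in F) K) g -> small (\bigcup_(K in F) K).
Proof.
move=> [Wwo Wsmall] [Fsmall Fchain Fprog] Ng.
have NKg K : F K -> ~ K g by move=> FK Kg; apply: Ng; exists K.
pose m K := epsilon (inhabits g) (least_outside W K).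
have mP K : F K -> least_outside W K (m K).
  by move=> FK; apply: epsilon_spec; apply: least_outside_exists Wwo (NKg K FK).
have union_sig : \bigcup_(K in F) K `<=` (fun x => exists K : {K | F K}, proj1_sig K x).
  by move=> x [K FK Kx]; exists (exist _ K FK).
apply: small_subset union_sig (small_bigcup X_regular _ _).
- apply: card_le_lt_trans (Wsmall g).
  exists (fun K => exist _ (m (proj1_sig K)) ((mP _ (proj2_sig K)).2 g (NKg _ (proj2_sig K)))).
  move=> [K FK] [K2 FK2] /(congr1 (@proj1_sig _ _)) /= mKK2; apply: sig_eq => /=.
  have [sub|sub] := Fchain K K2 FK FK2.
  + have [sub'|Nsub'] := pselect (K2 `<=` K); first exact/seteqP.
    by case: (mP K2 FK2).1; rewrite -mKK2; apply: Fprog (mP K FK).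
  + have [sub'|Nsub'] := pselect (K `<=` K2); first exact/seteqP.
    by case: (mP K FK).1; rewrite mKK2; apply: Fprog (mP K2 FK2).
- by move=> [K FK]; apply: Fsmall.
Qed.

Lemma tower_cover (F : set (set X)) (S : set X) :
  tower F -> (forall x, (\bigcup_(K in F) K) x) -> small S -> exists2 K, F K & S `<=` K.
Proof.
move=> [Fsmall Fchain _] cover Ss; apply: contrapT => NSK.
have out K : F K -> exists2 a, S a & ~ K a.
  move=> FK; apply: contrapT => NSa; apply: NSK; exists K => // a Sa.
  by apply: contrapT => Ka; apply: NSa; exists a.
pose Kof a := epsilon (inhabits setT) (fun K => F K /\ K a).
have KofP a : F (Kof a) /\ Kof a a.
  have [K FK Ka] := cover a.
  by apply: (epsilon_spec _ (fun K => F K /\ K a)); exists K.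
have cover_Kof : [set: X] `<=` (fun x => exists a : {a | S a}, Kof (proj1_sig a) x).
  move=> x _; have [K FK Kx] := cover x; have [a Sa Ka] := out K FK.
  exists (exist _ a Sa) => /=; have [sub|sub] := Fchain _ _ (KofP a).1 FK.
  + by case: Ka; apply: sub; apply: (KofP a).2.
  + exact: sub.
apply: (@setT_not_small X); apply: small_subset cover_Kof (small_bigcup X_regular Ss _).
by move=> a; apply: Fsmall; apply: (KofP _).1.
Qed.

End Towers.

(** * Subgroups and cosets *)

Declare Scope group_scope.
Delimit Scope group_scope with g.
Notation "x * y" := (gmul _ x y) : group_scope.
Notation "x ^-1" := (ginv _ x) : group_scope.
Notation "1" := (gone _) : group_scope.
Local Open Scope group_scope.

Section Groups.
Variable G : Group.
Implicit Types (x y z : G) (K S : set G).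

Lemma mulKg x y : x^-1 * (x * y) = y.
Proof. by rewrite gmulA gmulVl gmul1l. Qed.

Lemma mulKVg x y : x * (x^-1 * y) = y.
Proof. by rewrite gmulA gmulVr gmul1l. Qed.

Lemma mulgK x y : y * x * x^-1 = y.
Proof. by rewrite -gmulA gmulVr gmul1r. Qed.

Lemma mulgI x y z : x * y = x * z -> y = z.
Proof. by move=> /(congr1 (gmul G x^-1)); rewrite !mulKg. Qed.

Lemma invg_uniq x y : x * y = 1 -> x^-1 = y.
Proof. by move=> xy; rewrite -(gmul1r _ x^-1) -xy mulKg. Qed.

Lemma invgK x : x^-1^-1 = x.
Proof. exact/invg_uniq/gmulVl. Qed.

Lemma invgM x y : (x * y)^-1 = y^-1 * x^-1.
Proof. by apply: invg_uniq; rewrite -gmulA (gmulA _ y) gmulVr gmul1l gmulVr. Qed.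

Lemma invg1 : (1 : G)^-1 = 1.
Proof. exact/invg_uniq/gmul1l. Qed.

Lemma invg_mulKl x y z : (x * y)^-1 * (x * z) = y^-1 * z.
Proof. by rewrite invgM -gmulA mulKg. Qed.

Record subgroup K : Prop := {
  group1 : K 1;
  groupM : forall x y, K x -> K y -> K (x * y);
  groupV : forall x, K x -> K x^-1 }.

Lemma subgroup_set1 : subgroup [set 1].
Proof. by split=> [|x y -> ->|x ->]; rewrite /set1 /= ?gmul1l ?invg1. Qed.

Definition same_coset K x y : Prop := K (x^-1 * y).

Section SameCoset.
Variable K : set G.
Hypothesis K_subgroup : subgroup K.

Lemma same_coset_refl x : same_coset K x x.
Proof. by rewrite /same_coset gmulVl; apply: group1. Qed.

Lemma same_coset_sym x y : same_coset K x y -> same_coset K y x.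
Proof. by move=> /(groupV K_subgroup); rewrite invgM invgK. Qed.

Lemma same_coset_trans x y z : same_coset K x y -> same_coset K y z -> same_coset K x z.
Proof. by move=> xy yz; rewrite /same_coset -(mulKVg y z) gmulA; apply: groupM. Qed.

Lemma same_coset_mem x y : K x -> K y -> same_coset K x y.
Proof. by move=> Kx Ky; exact: (groupM K_subgroup (groupV K_subgroup Kx) Ky). Qed.

Lemma same_coset_memE x y : same_coset K x y -> K x -> K y.
Proof. by move=> xy Kx; rewrite -(mulKVg x y); apply: groupM. Qed.

Lemma mem_sandwich x y z : K x -> K y -> K (x^-1 * z * y) <-> K z.
Proof.
move=> Kx Ky; split=> [Kxzy|Kz].
- have -> : z = x * (x^-1 * z * y) * y^-1 by rewrite gmulA mulKVg mulgK.
  exact: (groupM K_subgroup (groupM K_subgroup Kx Kxzy) (groupV K_subgroup Ky)).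
- exact: (groupM K_subgroup (groupM K_subgroup (groupV K_subgroup Kx) Kz) Ky).
Qed.

End SameCoset.

Lemma subgroup_bigcup (F : set (set G)) K0 :
  F K0 -> (forall K, F K -> subgroup K) -> total_on F subset ->
  subgroup (\bigcup_(K in F) K).
Proof.
move=> FK0 Fsub Fchain; split.
- by exists K0 => //; apply: group1 (Fsub _ FK0).
- move=> x y [K FK Kx] [K2 FK2 K2y].
  have [KK2|K2K] := Fchain _ _ FK FK2.
  + by exists K2 => //; exact: (groupM (Fsub _ FK2) (KK2 _ Kx) K2y).
  + by exists K => //; exact: (groupM (Fsub _ FK) Kx (K2K _ K2y)).
- by move=> x [K FK Kx]; exists K => //; exact: (groupV (Fsub _ FK) Kx).
Qed.

Definition mul_inv_step S : set G :=
  fun x => S x \/ (exists a b, S a /\ S b /\ x = a * b) \/ S x^-1.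

Lemma subgroup_nat_union (Sn : nat -> set G) :
  Sn 0 1 -> (forall n, mul_inv_step (Sn n) `<=` Sn n.+1) ->
  subgroup (fun x => exists n, Sn n x).
Proof.
move=> S01 step.
have mono k n : Sn n `<=` Sn (k + n).
  by elim: k => [|k IH] x // /IH Sx; apply: step; left.
split.
- by exists 0.
- move=> x y [n Snx] [m Smy]; exists (m + n).+1; apply: step; right; left.
  by exists x, y; split; [apply: mono|split; [rewrite addnC; apply: mono|]].
- by move=> x [n Snx]; exists n.+1; apply: step; right; right; rewrite invgK.
Qed.

Lemma small_mul_inv_step S :
  regular_card G -> uncountable G -> small S -> small (mul_inv_step S).
Proof.
move=> Greg Gunc Ss.
have Sprod : small (fun x => exists a : {a | S a}, (gmul G (proj1_sig a) @` S) x).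
  exact: (small_bigcup Greg Ss (fun a => small_image Greg Gunc _ Ss)).
apply: small_subset (small_setU Greg Gunc Ss
  (small_setU Greg Gunc Sprod (small_image Greg Gunc (ginv G) Ss))).
move=> x [Sx|[[a [b [Sa [Sb ->]]]]|Sx]]; [by left|right; left|right; right].
- by exists (exist _ a Sa); exists b.
- by exists x^-1; rewrite ?invgK.
Qed.

Definition coset_rep K x : G :=
  epsilon (inhabits 1) (fun r => same_coset K x r /\ (K x -> r = 1)).

Section CosetRep.
Variable K : set G.
Hypothesis K_subgroup : subgroup K.

Lemma coset_rep_spec x : same_coset K x (coset_rep K x) /\ (K x -> coset_rep K x = 1).
Proof.
apply: (epsilon_spec _ (fun r => same_coset K x r /\ (K x -> r = 1))).
have [Kx|NKx] := pselect (K x).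
- by exists 1; split=> //; rewrite /same_coset gmul1r; apply: groupV.
- by exists x; split=> //; apply: same_coset_refl.
Qed.

Lemma same_coset_rep x : same_coset K x (coset_rep K x).
Proof. exact: (coset_rep_spec x).1. Qed.

Lemma coset_rep1 x : K x -> coset_rep K x = 1.
Proof. exact: (coset_rep_spec x).2. Qed.

Lemma coset_rep_eqP x y : coset_rep K x = coset_rep K y <-> same_coset K x y.
Proof.
split=> [xy|xy].
  apply: (same_coset_trans K_subgroup (same_coset_rep x)).
  by rewrite xy; exact: (same_coset_sym K_subgroup (same_coset_rep y)).
rewrite /coset_rep; congr epsilon; apply: funext => r; apply: propext.
have yx := same_coset_sym K_subgroup xy.
split=> -[xr r1]; split.
- exact: (same_coset_trans K_subgroup yx xr).
- by move=> Ky; apply: r1; exact: (same_coset_memE K_subgroup yx Ky).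
- exact: (same_coset_trans K_subgroup xy xr).
- by move=> Kx; apply: r1; exact: (same_coset_memE K_subgroup xy Kx).
Qed.

Lemma coset_rep_fixed_eq x y : coset_rep K x = x -> coset_rep K y = y ->
  same_coset K x y -> x = y.
Proof. by move=> xK yK /coset_rep_eqP; rewrite xK yK. Qed.

Lemma coset_rep_id x : coset_rep K (coset_rep K x) = coset_rep K x.
Proof. by apply/coset_rep_eqP; exact: (same_coset_sym K_subgroup (same_coset_rep x)). Qed.

Lemma exists_transversal_inj :
  regular_card G -> uncountable G -> small K ->
  exists rho : G -> G, (forall x, coset_rep K (rho x) = rho x) /\
    (forall x y, same_coset K (rho x) (rho y) -> x = y).
Proof.
move=> Greg Gunc Ks.
have NTs : ~ small (fun t => coset_rep K t = t).
  move=> Ts; have cover : [set: G] `<=`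
      (fun x => exists t : {t | coset_rep K t = t}, same_coset K (proj1_sig t) x).
    move=> x _; exists (exist (fun t => coset_rep K t = t) (coset_rep K x) (coset_rep_id x)).
    exact: (same_coset_sym K_subgroup (same_coset_rep x)).
  apply: (@setT_not_small G); apply: small_subset cover (small_bigcup Greg Ts _).
  move=> [t tP] /=; apply: (small_inj (f := gmul G t^-1)) Ks (card_le_refl G) => //.
  by move=> a b _ _ /mulgI.
have [j j_inj] := not_small_card_le NTs.
exists (fun x => proj1_sig (j x)); split=> [x|x y]; first exact: proj2_sig (j x).
rewrite -coset_rep_eqP (proj2_sig (j x)) (proj2_sig (j y)).
by move=> /sig_eq /j_inj.
Qed.

End CosetRep.
End Groups.

(** * Stages *)

(* A stage of the construction is a set of tokens: [Level K L] records a pair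
   of small subgroups that the asymorphism will match coset by coset, and
   [Pair x u] records the value [u] it takes at [x]. *)
Inductive token (G H : Group) : Type :=
| Level of set G & set H
| Pair of G & H.
Arguments Level {G H}.
Arguments Pair {G H}.

Section Validity.
Variables (G H : Group) (WG : G -> G -> Prop) (WH : H -> H -> Prop).
Implicit Types (X : set (token G H)) (K : set G) (L : set H).

Record valid X : Prop := {
  level_subgroupl : forall K L, X (Level K L) -> subgroup K;
  level_subgroupr : forall K L, X (Level K L) -> subgroup L;
  level_smalll : forall K L, X (Level K L) -> small K;
  level_smallr : forall K L, X (Level K L) -> small L;
  level_chain : forall K L K2 L2, X (Level K L) -> X (Level K2 L2) ->
    K `<=` K2 /\ L `<=` L2 \/ K2 `<=` K /\ L2 `<=` L;
  level_progressl : forall K L K2 L2 x, X (Level K L) -> X (Level K2 L2) ->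
    K `<` K2 -> least_outside WG K x -> K2 x;
  level_progressr : forall K L K2 L2 u, X (Level K L) -> X (Level K2 L2) ->
    L `<` L2 -> least_outside WH L u -> L2 u;
  pair_functional : forall x u v, X (Pair x u) -> X (Pair x v) -> u = v;
  pair_injective : forall x y u, X (Pair x u) -> X (Pair y u) -> x = y;
  pair_same_coset : forall K L x u y v, X (Level K L) -> X (Pair x u) -> X (Pair y v) ->
    same_coset K x y <-> same_coset L u v;
  level_domain : forall K L x, X (Level K L) -> K x -> exists u, X (Pair x u);
  level_range : forall K L u, X (Level K L) -> L u -> exists x, X (Pair x u);
  pair_level : forall x u, X (Pair x u) -> exists K L, [/\ X (Level K L), K x & L u] }.

Lemma valid_bigcup (F : set (set (token G H))) :
  F `<=` valid -> total_on F subset -> valid (\bigcup_(X in F) X).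
Proof.
move=> Fvalid Fchain; set U := \bigcup_(X in F) X.
have common2 t1 t2 : U t1 -> U t2 -> exists2 X, F X & X t1 /\ X t2.
  move=> [X1 FX1 X1t1] [X2 FX2 X2t2]; have [X12|X21] := Fchain _ _ FX1 FX2.
  - by exists X2 => //; split=> //; apply: X12.
  - by exists X1 => //; split=> //; apply: X21.
have common3 t1 t2 t3 : U t1 -> U t2 -> U t3 ->
    exists2 X, F X & [/\ X t1, X t2 & X t3].
  move=> U1 U2 [X3 FX3 X3t3]; have [X FX [Xt1 Xt2]] := common2 _ _ U1 U2.
  have [XX3|X3X] := Fchain _ _ FX FX3.
  - by exists X3 => //; split=> //; apply: XX3.
  - by exists X => //; split=> //; apply: X3X.
split.
- by move=> K L [X FX XKL]; exact: (level_subgroupl (Fvalid _ FX) XKL).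
- by move=> K L [X FX XKL]; exact: (level_subgroupr (Fvalid _ FX) XKL).
- by move=> K L [X FX XKL]; exact: (level_smalll (Fvalid _ FX) XKL).
- by move=> K L [X FX XKL]; exact: (level_smallr (Fvalid _ FX) XKL).
- move=> K L K2 L2 U1 U2; have [X /Fvalid Xv [Xt1 Xt2]] := common2 _ _ U1 U2.
  exact: (level_chain Xv Xt1 Xt2).
- move=> K L K2 L2 x U1 U2; have [X /Fvalid Xv [Xt1 Xt2]] := common2 _ _ U1 U2.
  exact: (level_progressl Xv Xt1 Xt2).
- move=> K L K2 L2 u U1 U2; have [X /Fvalid Xv [Xt1 Xt2]] := common2 _ _ U1 U2.
  exact: (level_progressr Xv Xt1 Xt2).
- move=> x u v U1 U2; have [X /Fvalid Xv [Xt1 Xt2]] := common2 _ _ U1 U2.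
  exact: (pair_functional Xv Xt1 Xt2).
- move=> x y u U1 U2; have [X /Fvalid Xv [Xt1 Xt2]] := common2 _ _ U1 U2.
  exact: (pair_injective Xv Xt1 Xt2).
- move=> K L x u y v U1 U2 U3; have [X /Fvalid Xv [Xt1 Xt2 Xt3]] := common3 _ _ _ U1 U2 U3.
  exact: (pair_same_coset Xv Xt1 Xt2 Xt3).
- move=> K L x [X FX XKL] Kx; have [u Xxu] := level_domain (Fvalid _ FX) XKL Kx.
  by exists u, X.
- move=> K L u [X FX XKL] Lu; have [x Xxu] := level_range (Fvalid _ FX) XKL Lu.
  by exists x, X.
- move=> x u [X FX Xxu]; have [K [L [XKL Kx Lu]]] := pair_level (Fvalid _ FX) Xxu.
  by exists K, L; split=> //; exists X.
Qed.

Hypotheses (G_regular : regular_card G) (G_uncountable : uncountable G).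
Hypotheses (H_regular : regular_card H) (H_uncountable : uncountable H).

Definition initial_stage : set (token G H) :=
  fun t => t = Level [set 1] [set 1] \/ t = Pair 1 1.

Lemma valid_initial_stage : valid initial_stage.
Proof.
have level K L : initial_stage (Level K L) -> K = [set 1] /\ L = [set 1].
  by case=> // -[-> ->].
have pair x u : initial_stage (Pair x u) -> x = 1 /\ u = 1.
  by case=> // -[-> ->].
split.
- by move=> K L /level[-> _]; apply: subgroup_set1.
- by move=> K L /level[_ ->]; apply: subgroup_set1.
- by move=> K L /level[-> _]; apply: small_set1.
- by move=> K L /level[_ ->]; apply: small_set1.
- by move=> K L K2 L2 /level[-> ->] /level[-> ->]; left; split.
- by move=> K L K2 L2 x /level[-> _] /level[-> _] [].
- by move=> K L K2 L2 u /level[_ ->] /level[_ ->] [].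
- by move=> x u v /pair[_ ->] /pair[_ ->].
- by move=> x y u /pair[-> _] /pair[-> _].
- move=> K L x u y v /level[-> ->] /pair[-> ->] /pair[-> ->].
  by rewrite /same_coset !gmulVl.
- by move=> K L x /level[-> _] ->; exists 1; right.
- by move=> K L u /level[_ ->] ->; exists 1; right.
- by move=> x u /pair[-> ->]; exists [set 1], [set 1]; split=> //; left.
Qed.

End Validity.

Lemma prec_mapping_same_coset (G H : Group) (f : G -> H) (P : set G -> set H -> Prop) :
  (forall S, small S -> exists K L, [/\ P K L, S `<=` K, L 1 & small L]) ->
  (forall K L x y, P K L -> same_coset K x y -> same_coset L (f x) (f y)) ->
  prec_mapping (ballean_of_group G) (ballean_of_group H) f.
Proof.
move=> cover fP [S [S1 Ss]]; have [K [L [PKL SK L1 Ls]]] := cover S Ss.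
exists (exist _ L (conj L1 Ls)) => x _ [a [Sa ->]] /=.
exists ((f x)^-1 * f (x * a)); split; last by rewrite mulKVg.
by apply: (fP _ _ _ _ PKL); rewrite /same_coset mulKg; apply: SK.
Qed.

Section Stage.
Variables (G H : Group) (WG : G -> G -> Prop) (WH : H -> H -> Prop).
Variable A : set (token G H).
Hypothesis A_valid : valid WG WH A.

Definition levelsl : set (set G) := fun K => exists L, A (Level K L).
Definition levelsr : set (set H) := fun L => exists K, A (Level K L).
Definition Kunion : set G := \bigcup_(K in levelsl) K.
Definition Lunion : set H := \bigcup_(L in levelsr) L.

Lemma tower_levelsl : tower WG levelsl.
Proof.
split.
- by move=> K [L AKL]; exact: (level_smalll A_valid AKL).
- move=> K K2 [L AKL] [L2 AKL2].
  by case: (level_chain A_valid AKL AKL2) => -[KK2 _]; [left|right].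
- by move=> K K2 x [L AKL] [L2 AKL2]; exact: (level_progressl A_valid AKL AKL2).
Qed.

Lemma tower_levelsr : tower WH levelsr.
Proof.
split.
- by move=> L [K AKL]; exact: (level_smallr A_valid AKL).
- move=> L L2 [K AKL] [K2 AKL2].
  by case: (level_chain A_valid AKL AKL2) => -[_ LL2]; [left|right].
- by move=> L L2 u [K AKL] [K2 AKL2]; exact: (level_progressr A_valid AKL AKL2).
Qed.

Lemma level_sub_union K L : A (Level K L) -> K `<=` Kunion /\ L `<=` Lunion.
Proof. by move=> AKL; split=> [x Kx|u Lu]; [exists K => //; exists L|exists L => //; exists K]. Qed.

Section NonEmpty.
Variables (K0 : set G) (L0 : set H).
Hypothesis A_K0L0 : A (Level K0 L0).

Lemma subgroup_Kunion : subgroup Kunion.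
Proof.
apply: (subgroup_bigcup (K0 := K0)); first by exists L0.
  by move=> K [L AKL]; exact: (level_subgroupl A_valid AKL).
exact: tower_chain tower_levelsl.
Qed.

Lemma subgroup_Lunion : subgroup Lunion.
Proof.
apply: (subgroup_bigcup (K0 := L0)); first by exists K0.
  by move=> L [K AKL]; exact: (level_subgroupr A_valid AKL).
exact: tower_chain tower_levelsr.
Qed.

End NonEmpty.

Lemma pair_union x u : A (Pair x u) -> Kunion x /\ Lunion u.
Proof.
move=> Axu; have [K [L [AKL Kx Lu]]] := pair_level A_valid Axu.
by split; [apply: (level_sub_union AKL).1|apply: (level_sub_union AKL).2].
Qed.

Definition fwd (x : G) : H := epsilon (inhabits 1) (fun u => A (Pair x u)).
Definition bwd (u : H) : G := epsilon (inhabits 1) (fun x => A (Pair x u)).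

Lemma fwd_pair x : Kunion x -> A (Pair x (fwd x)).
Proof.
move=> [K [L AKL] Kx]; apply: (epsilon_spec _ (fun u => A (Pair x u))).
exact: (level_domain A_valid AKL Kx).
Qed.

Lemma bwd_pair u : Lunion u -> A (Pair (bwd u) u).
Proof.
move=> [L [K AKL] Lu]; apply: (epsilon_spec _ (fun x => A (Pair x u))).
exact: (level_range A_valid AKL Lu).
Qed.

Lemma fwdE x u : A (Pair x u) -> fwd x = u.
Proof. by move=> Axu; apply: (pair_functional A_valid (fwd_pair (pair_union Axu).1) Axu). Qed.

Lemma bwdE x u : A (Pair x u) -> bwd u = x.
Proof. by move=> Axu; apply: (pair_injective A_valid (bwd_pair (pair_union Axu).2) Axu). Qed.

Lemma fwd_Lunion x : Kunion x -> Lunion (fwd x).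
Proof. by move=> /fwd_pair /pair_union[]. Qed.

Lemma bwd_Kunion u : Lunion u -> Kunion (bwd u).
Proof. by move=> /bwd_pair /pair_union[]. Qed.

Lemma fwdK x : Kunion x -> bwd (fwd x) = x.
Proof. by move=> /fwd_pair /bwdE. Qed.

Lemma bwdK u : Lunion u -> fwd (bwd u) = u.
Proof. by move=> /bwd_pair /fwdE. Qed.

Lemma small_Lunion : card_le G H -> small Kunion -> small Lunion.
Proof.
move=> GH Ks; apply: (small_inj (f := bwd)) _ bwd_Kunion Ks GH.
by move=> u v /set_mem Lu /set_mem Lv /(congr1 fwd); rewrite !bwdK.
Qed.

Lemma small_Kunion : card_le H G -> small Lunion -> small Kunion.
Proof.
move=> HG Ls; apply: (small_inj (f := fwd)) _ fwd_Lunion Ls HG.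
by move=> x y /set_mem Kx /set_mem Ky /(congr1 bwd); rewrite !fwdK.
Qed.

Lemma least_outside_levell K L x : A (Level K L) -> ~ Kunion `<=` K ->
  least_outside WG K x -> Kunion x.
Proof.
move=> AKL /existsNP[z /not_implyP[[K2 [L2 AKL2] K2z] NKz]] Kx.
exists K2; first by exists L2.
apply: (level_progressl A_valid AKL AKL2 _ Kx); split; last by move=> /(_ z K2z).
by case: (level_chain A_valid AKL AKL2) => -[// K2K _]; case: NKz; apply: K2K.
Qed.

Lemma least_outside_levelr K L u : A (Level K L) -> ~ Lunion `<=` L ->
  least_outside WH L u -> Lunion u.
Proof.
move=> AKL /existsNP[z /not_implyP[[L2 [K2 AKL2] L2z] NLz]] Lu.
exists L2; first by exists K2.
apply: (level_progressr A_valid AKL AKL2 _ Lu); split; last by move=> /(_ z L2z).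
by case: (level_chain A_valid AKL AKL2) => -[_ // L2L]; case: NLz; apply: L2L.
Qed.

Hypotheses (G_regular : regular_card G) (H_regular : regular_card H).

Lemma asymorphic_of_full_stage :
  (forall x, Kunion x) -> (forall u, Lunion u) ->
  asymorphic (ballean_of_group G) (ballean_of_group H).
Proof.
move=> Kfull Lfull; exists fwd, bwd; split; [|split; [|split]].
- by move=> x; apply: fwdK.
- by move=> u; apply: bwdK.
- apply: (prec_mapping_same_coset (P := fun K L => A (Level K L))).
    move=> S Ss; have [K [L AKL] SK] := tower_cover G_regular tower_levelsl Kfull Ss.
    exists K, L; split=> //; last exact: (level_smallr A_valid AKL).
    exact: group1 (level_subgroupr A_valid AKL).
  move=> K L x y AKL.
  exact: (pair_same_coset A_valid AKL (fwd_pair (Kfull x)) (fwd_pair (Kfull y))).1.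
- apply: (prec_mapping_same_coset (P := fun L K => A (Level K L))).
    move=> S Ss; have [L [K AKL] SL] := tower_cover H_regular tower_levelsr Lfull Ss.
    exists L, K; split=> //; last exact: (level_smalll A_valid AKL).
    exact: group1 (level_subgroupl A_valid AKL).
  move=> L K u v AKL.
  exact: (pair_same_coset A_valid AKL (bwd_pair (Lfull u)) (bwd_pair (Lfull v))).2.
Qed.

End Stage.

(** * Extending a stage with small unions *)

Section Extension.
Variables (G H : Group) (WG : G -> G -> Prop) (WH : H -> H -> Prop).
Hypotheses (WG_wo : well_ordering WG) (WH_wo : well_ordering WH).
Hypotheses (G_regular : regular_card G) (G_uncountable : uncountable G).
Hypotheses (H_regular : regular_card H) (H_uncountable : uncountable H).
Variables (phi : G -> H) (psi : H -> G).
Hypotheses (phiK : cancel phi psi) (psiK : cancel psi phi).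
Variable A : set (token G H).
Hypothesis A_valid : valid WG WH A.
Variables (K0 : set G) (L0 : set H).
Hypothesis A_K0L0 : A (Level K0 L0).

Local Notation KA := (Kunion A).
Local Notation LA := (Lunion A).
Local Notation fA := (fwd A).

Hypotheses (KA_small : small KA) (LA_small : small LA).
Variables (mG : G) (mH : H).
Hypotheses (mG_least : least_outside WG KA mG) (mH_least : least_outside WH LA mH).
Variables (rhoG : G -> G) (rhoH : H -> H).
Hypotheses (rhoG_rep : forall x, coset_rep KA (rhoG x) = rhoG x)
  (rhoG_inj : forall x y, same_coset KA (rhoG x) (rhoG y) -> x = y).
Hypotheses (rhoH_rep : forall u, coset_rep LA (rhoH u) = rhoH u)
  (rhoH_inj : forall u v, same_coset LA (rhoH u) (rhoH v) -> u = v).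

Let KA_subgroup := subgroup_Kunion A_valid A_K0L0.
Let LA_subgroup := subgroup_Lunion A_valid A_K0L0.

(* Closing under [rhoH \o phi] and [rhoG \o psi] gives injections between
   the [KA]-cosets of [Kext] and the [LA]-cosets of [Lext]; adding [mG] and
   [mH] makes the new level progress past [KA] and [LA]. *)
Fixpoint closure (n : nat) : set G * set H :=
  if n is n'.+1 then
    let K := (closure n').1 in let L := (closure n').2 in
    (mul_inv_step K `|` ([set mG] `|` phi @^-1` L `|` rhoG @` K),
     mul_inv_step L `|` ([set mH] `|` psi @^-1` K `|` rhoH @` L))
  else (KA, LA).

Definition Kext : set G := fun x => exists n, (closure n).1 x.
Definition Lext : set H := fun u => exists n, (closure n).2 u.

Lemma closure_small n : small (closure n).1 /\ small (closure n).2.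
Proof.
have GH : card_le G H by exists phi => x y /(congr1 psi); rewrite !phiK.
have HG : card_le H G by exists psi => u v /(congr1 phi); rewrite !psiK.
elim: n => [//|n [Ks Ls]] /=; split.
- have preim : small (phi @^-1` (closure n).2).
    apply: (small_inj (f := phi)) _ (fun x Lx => Lx) Ls HG.
    by move=> x y _ _ /(congr1 psi); rewrite !phiK.
  apply: (small_setU G_regular G_uncountable (small_mul_inv_step G_regular G_uncountable Ks)).
  apply: (small_setU G_regular G_uncountable _ (small_image G_regular G_uncountable rhoG Ks)).
  exact: (small_setU G_regular G_uncountable (small_set1 G_regular G_uncountable mG) preim).
- have preim : small (psi @^-1` (closure n).1).
    apply: (small_inj (f := psi)) _ (fun u Ku => Ku) Ks GH.
    by move=> u v _ _ /(congr1 phi); rewrite !psiK.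
  apply: (small_setU H_regular H_uncountable (small_mul_inv_step H_regular H_uncountable Ls)).
  apply: (small_setU H_regular H_uncountable _ (small_image H_regular H_uncountable rhoH Ls)).
  exact: (small_setU H_regular H_uncountable (small_set1 H_regular H_uncountable mH) preim).
Qed.

Lemma Kext_small : small Kext.
Proof.
exact: (small_bigcup G_regular (card_lt_nat G_regular G_uncountable)
  (fun n => (closure_small n).1)).
Qed.

Lemma Lext_small : small Lext.
Proof.
exact: (small_bigcup H_regular (card_lt_nat H_regular H_uncountable)
  (fun n => (closure_small n).2)).
Qed.

Lemma Kext_subgroup : subgroup Kext.
Proof. by apply: subgroup_nat_union; [apply: group1 KA_subgroup|move=> n x Kx; left]. Qed.

Lemma Lext_subgroup : subgroup Lext.
Proof. by apply: subgroup_nat_union; [apply: group1 LA_subgroup|move=> n x Lx; left]. Qed.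

Lemma KA_Kext : KA `<=` Kext. Proof. by move=> x KAx; exists 0. Qed.
Lemma LA_Lext : LA `<=` Lext. Proof. by move=> u LAu; exists 0. Qed.

Lemma mG_Kext : Kext mG. Proof. by exists 1%N; right; left; left. Qed.
Lemma mH_Lext : Lext mH. Proof. by exists 1%N; right; left; left. Qed.

Lemma phi_Lext x : Kext x -> Lext (phi x).
Proof. by move=> [n Kx]; exists n.+1; right; left; right; rewrite /preimage /= phiK. Qed.

Lemma psi_Kext u : Lext u -> Kext (psi u).
Proof. by move=> [n Lu]; exists n.+1; right; left; right; rewrite /preimage /= psiK. Qed.

Lemma rhoG_Kext x : Kext x -> Kext (rhoG x).
Proof. by move=> [n Kx]; exists n.+1; right; right; exists x. Qed.

Lemma rhoH_Lext u : Lext u -> Lext (rhoH u).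
Proof. by move=> [n Lu]; exists n.+1; right; right; exists u. Qed.

Definition transK : set G := fun x => Kext x /\ coset_rep KA x = x.
Definition transL : set H := fun u => Lext u /\ coset_rep LA u = u.

Lemma card_eq_transversals : card_eq {x | transK x} {u | transL u}.
Proof.
apply: card_eq_of_le.
- exists (fun t => exist transL (rhoH (phi (proj1_sig t)))
    (conj (rhoH_Lext (phi_Lext (proj1 (proj2_sig t)))) (rhoH_rep _))).
  move=> [x Tx] [y Ty] /(congr1 (@proj1_sig _ _)) /= rhoxy; apply: sig_eq => /=.
  rewrite -(phiK x) -(phiK y); congr psi; apply: rhoH_inj.
  by rewrite rhoxy; apply: same_coset_refl.
- exists (fun t => exist transK (rhoG (psi (proj1_sig t)))
    (conj (rhoG_Kext (psi_Kext (proj1 (proj2_sig t)))) (rhoG_rep _))).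
  move=> [u Tu] [v Tv] /(congr1 (@proj1_sig _ _)) /= rhouv; apply: sig_eq => /=.
  rewrite -(psiK u) -(psiK v); congr phi; apply: rhoG_inj.
  by rewrite rhouv; apply: same_coset_refl.
Qed.

Section Matching.
Variable s : G -> H.
Hypotheses (s_trans : forall x, transK x -> transL (s x)) (s_inj : {in transK &, injective s})
  (s_onto : forall u, transL u -> exists2 x, transK x & s x = u).

Local Notation rep := (coset_rep KA).

(* Each [x] in [Kext] is [rep x * k] with [k] in [KA]; match the coset
   representative through [s] and the [KA]-part through [fA].  The
   constant left factor makes [fext] extend [fA]. *)
Definition fext (x : G) : H := (s 1)^-1 * s (rep x) * fA ((rep x)^-1 * x).

Lemma offset_KA x : KA ((rep x)^-1 * x).
Proof. exact: (same_coset_sym KA_subgroup (same_coset_rep KA_subgroup x)). Qed.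

Lemma transK_rep x : Kext x -> transK (rep x).
Proof.
move=> Kx; split; last exact: coset_rep_id.
rewrite -(mulKVg x (rep x)).
exact: (groupM Kext_subgroup Kx (KA_Kext (same_coset_rep KA_subgroup x))).
Qed.

Lemma transK1 : transK 1.
Proof. by split; [apply: group1 Kext_subgroup|apply: coset_rep1 (group1 KA_subgroup)]. Qed.

Lemma fext_Lext x : Kext x -> Lext (fext x).
Proof.
move=> Kx; apply: (groupM Lext_subgroup _ (LA_Lext (fwd_Lunion A_valid (offset_KA x)))).
exact: (groupM Lext_subgroup (groupV Lext_subgroup (proj1 (s_trans transK1)))
  (proj1 (s_trans (transK_rep Kx)))).
Qed.

Lemma fext_KA x : KA x -> fext x = fA x.
Proof. by move=> KAx; rewrite /fext coset_rep1 // gmulVl invg1 !gmul1l. Qed.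

Lemma fext_inv_mul x y : (fext x)^-1 * fext y =
  (fA ((rep x)^-1 * x))^-1 * ((s (rep x))^-1 * s (rep y)) * fA ((rep y)^-1 * y).
Proof. by rewrite /fext -!(gmulA _ (s 1)^-1) invg_mulKl invgM !gmulA. Qed.

Lemma same_coset_fext x y : Kext x -> Kext y ->
  same_coset KA x y <-> same_coset LA (fext x) (fext y).
Proof.
move=> Kx Ky; rewrite -(coset_rep_eqP KA_subgroup) /same_coset fext_inv_mul.
rewrite mem_sandwich //; try exact: (fwd_Lunion A_valid (offset_KA _)).
split=> [->|]; first exact: (same_coset_refl LA_subgroup).
move=> /(coset_rep_fixed_eq LA_subgroup (proj2 (s_trans (transK_rep Kx)))
  (proj2 (s_trans (transK_rep Ky)))).
by apply: s_inj; rewrite inE; apply: transK_rep.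
Qed.

Lemma fext_same_rep x y : same_coset KA x y ->
  x^-1 * y = ((rep x)^-1 * x)^-1 * ((rep y)^-1 * y) /\
  (fext x)^-1 * fext y = (fA ((rep x)^-1 * x))^-1 * fA ((rep y)^-1 * y).
Proof.
move=> /(coset_rep_eqP KA_subgroup) rxy; rewrite fext_inv_mul -rxy gmulVl gmul1r.
by rewrite invg_mulKl.
Qed.

Lemma fext_inj x y : Kext x -> Kext y -> fext x = fext y -> x = y.
Proof.
move=> Kx Ky fxy.
have KAxy : same_coset KA x y.
  by apply/(same_coset_fext Kx Ky); rewrite fxy; apply: (same_coset_refl LA_subgroup).
have [_] := fext_same_rep KAxy; rewrite fxy gmulVl => /esym /invg_uniq.
rewrite invgK => /(congr1 (bwd A)).
rewrite (fwdK A_valid (offset_KA x)) (fwdK A_valid (offset_KA y)) => kxy.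
by rewrite -(mulKVg (rep x) x) kxy (proj2 (coset_rep_eqP KA_subgroup x y) KAxy) mulKVg.
Qed.

Lemma fext_onto u : Lext u -> exists2 x, Kext x & fext x = u.
Proof.
move=> Lu; set v := s 1 * u; set r := coset_rep LA v.
have Lv : Lext v by exact: (groupM Lext_subgroup (proj1 (s_trans transK1)) Lu).
have transLr : transL r.
  split; last exact: coset_rep_id.
  rewrite /r -(mulKVg v (coset_rep LA v)).
  exact: (groupM Lext_subgroup Lv (LA_Lext (same_coset_rep LA_subgroup v))).
have [t transKt str] := s_onto transLr.
have LAq : LA (r^-1 * v) by apply: (same_coset_sym LA_subgroup (same_coset_rep LA_subgroup v)).
have KAk := bwd_Kunion A_valid LAq.
exists (t * bwd A (r^-1 * v)); first exact: (groupM Kext_subgroup (proj1 transKt) (KA_Kext KAk)).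
have rep_tk : rep (t * bwd A (r^-1 * v)) = t.
  rewrite -[RHS](proj2 transKt); apply/(coset_rep_eqP KA_subgroup).
  by apply: (same_coset_sym KA_subgroup); rewrite /same_coset mulKg.
by rewrite /fext rep_tk mulKg (bwdK A_valid) // str /r /v -gmulA mulKVg mulKg.
Qed.

Lemma same_coset_level_fext K L x y : A (Level K L) -> Kext x -> Kext y ->
  same_coset K x y <-> same_coset L (fext x) (fext y).
Proof.
move=> AKL Kx Ky; have [KKA LLA] := level_sub_union AKL.
have pair z : A (Pair ((rep z)^-1 * z) (fA ((rep z)^-1 * z))).
  exact: (fwd_pair A_valid (offset_KA z)).
split=> [Kxy|Lxy].
- have [xy fxy] := fext_same_rep (KKA _ Kxy).
  rewrite /same_coset fxy; apply: (pair_same_coset A_valid AKL (pair x) (pair y)).1.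
  by rewrite /same_coset -xy.
- have KAxy : same_coset KA x y by apply/(same_coset_fext Kx Ky); apply: LLA.
  have [xy fxy] := fext_same_rep KAxy.
  rewrite /same_coset xy; apply: (pair_same_coset A_valid AKL (pair x) (pair y)).2.
  by rewrite /same_coset -fxy.
Qed.

Definition extension : set (token G H) :=
  A `|` [set Level Kext Lext] `|` (fun t => exists2 x, Kext x & t = Pair x (fext x)).

Lemma extension_level K L : extension (Level K L) -> A (Level K L) \/ K = Kext /\ L = Lext.
Proof. by case=> [[AKL|[-> ->]]|[x _ //]]; [left|right]. Qed.

Lemma extension_pair x u : extension (Pair x u) -> Kext x /\ u = fext x.
Proof.
case=> [[Axu|//]|[y Ky [-> ->]]] //.
have [KAx _] := pair_union A_valid Axu.
by rewrite -(fwdE A_valid Axu) fext_KA //; split=> //; apply: KA_Kext.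
Qed.

Lemma extension_level_sub K L : extension (Level K L) -> K `<=` Kext /\ L `<=` Lext.
Proof.
case/extension_level=> [AKL|[-> ->]]; last by split.
have [KKA LLA] := level_sub_union AKL.
by split=> [x /KKA|u /LLA]; [apply: KA_Kext|apply: LA_Lext].
Qed.

Lemma Kext_not_sub_KA : ~ Kext `<=` KA.
Proof. by move=> /(_ _ mG_Kext); apply: (proj1 mG_least). Qed.

Lemma Lext_not_sub_LA : ~ Lext `<=` LA.
Proof. by move=> /(_ _ mH_Lext); apply: (proj1 mH_least). Qed.

Lemma least_outside_Kext K L x : A (Level K L) -> least_outside WG K x -> Kext x.
Proof.
move=> AKL Kx; have [KAK|NKAK] := pselect (KA `<=` K).
  have KKA : K = KA by apply/seteqP; split=> //; apply: (level_sub_union AKL).1.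
  by rewrite KKA in Kx; rewrite (least_outside_unique WG_wo Kx mG_least); apply: mG_Kext.
exact/KA_Kext/(least_outside_levell A_valid AKL NKAK Kx).
Qed.

Lemma least_outside_Lext K L u : A (Level K L) -> least_outside WH L u -> Lext u.
Proof.
move=> AKL Lu; have [LAL|NLAL] := pselect (LA `<=` L).
  have LLA : L = LA by apply/seteqP; split=> //; apply: (level_sub_union AKL).2.
  by rewrite LLA in Lu; rewrite (least_outside_unique WH_wo Lu mH_least); apply: mH_Lext.
exact/LA_Lext/(least_outside_levelr A_valid AKL NLAL Lu).
Qed.

Lemma valid_extension : valid WG WH extension.
Proof.
split.
- move=> K L /extension_level[AKL|[-> _]]; last exact: Kext_subgroup.
  exact: (level_subgroupl A_valid AKL).
- move=> K L /extension_level[AKL|[_ ->]]; last exact: Lext_subgroup.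
  exact: (level_subgroupr A_valid AKL).
- move=> K L /extension_level[AKL|[-> _]]; last exact: Kext_small.
  exact: (level_smalll A_valid AKL).
- move=> K L /extension_level[AKL|[_ ->]]; last exact: Lext_small.
  exact: (level_smallr A_valid AKL).
- move=> K L K2 L2 /[dup] EKL /extension_level[AKL|[-> ->]]
                    /[dup] EKL2 /extension_level[AKL2|[-> ->]].
  + exact: (level_chain A_valid AKL AKL2).
  + by left; apply: extension_level_sub.
  + by right; apply: extension_level_sub.
  + by left; split.
- move=> K L K2 L2 x /extension_level[AKL|[-> _]] /extension_level[AKL2|[-> _]] [KK2 NK2K].
  + exact: (level_progressl A_valid AKL AKL2 (conj KK2 NK2K)).
  + by move=> /(least_outside_Kext AKL).
  + by case: Kext_not_sub_KA => y /KK2 /(level_sub_union AKL2).1.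
  + by case: NK2K.
- move=> K L K2 L2 u /extension_level[AKL|[_ ->]] /extension_level[AKL2|[_ ->]] [LL2 NL2L].
  + exact: (level_progressr A_valid AKL AKL2 (conj LL2 NL2L)).
  + by move=> /(least_outside_Lext AKL).
  + by case: Lext_not_sub_LA => v /LL2 /(level_sub_union AKL2).2.
  + by case: NL2L.
- by move=> x u v /extension_pair[_ ->] /extension_pair[_ ->].
- move=> x y u /extension_pair[Kx ->] /extension_pair[Ky fxy].
  exact: (fext_inj Kx Ky fxy).
- move=> K L x u y v /extension_level[AKL|[-> ->]] /extension_pair[Kx ->] /extension_pair[Ky ->].
  + exact: (same_coset_level_fext AKL Kx Ky).
  + split=> _; first exact: (same_coset_mem Lext_subgroup (fext_Lext Kx) (fext_Lext Ky)).
    exact: (same_coset_mem Kext_subgroup Kx Ky).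
- move=> K L x /extension_level_sub[KKe _] Kx; exists (fext x).
  by right; exists x => //; apply: KKe.
- move=> K L u /extension_level_sub[_ LLe] /LLe /fext_onto[x Kx <-].
  by exists x; right; exists x.
- move=> x u /extension_pair[Kx ->]; exists Kext, Lext.
  by split=> //; [left; right|apply: fext_Lext].
Qed.

Lemma proper_extension : A `<` extension.
Proof.
split; first by move=> t At; left; left.
move=> /(_ (Level Kext Lext)) AKe; apply: Kext_not_sub_KA.
by apply: (level_sub_union (AKe _)).1; left; right.
Qed.

End Matching.

Lemma exists_proper_extension : exists2 B, valid WG WH B & A `<` B.
Proof.
have [s [s_trans s_inj s_onto]] := card_eq_sig_bij 1 card_eq_transversals.
by exists (extension s); [apply: valid_extension|apply: proper_extension].
Qed.

End Extension.

(** * Maximal stages *)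

Section Maximal.
Variables (G H : Group) (WG : G -> G -> Prop) (WH : H -> H -> Prop).
Hypotheses (WG_initial : initial_ordering WG) (WH_initial : initial_ordering WH).
Hypotheses (G_regular : regular_card G) (G_uncountable : uncountable G).
Hypotheses (H_regular : regular_card H) (H_uncountable : uncountable H).
Hypothesis GH : card_eq G H.
Variable A : set (token G H).
Hypotheses (A_valid : valid WG WH A) (A_maximal : forall B, A `<` B -> ~ valid WG WH B).

Lemma maximal_has_level : exists K L, A (Level K L).
Proof.
apply: contrapT => Nlevel.
have A0 t : ~ A t.
  case: t => [K L AKL|x u /(pair_level A_valid)[K [L [AKL _ _]]]]; by apply: Nlevel; exists K, L.
have init_valid : valid WG WH (@initial_stage G H) :=
  valid_initial_stage WG WH G_regular G_uncountable H_regular H_uncountable.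
apply: (A_maximal _ init_valid); split=> [t /A0 //|/(_ (Level [set 1] [set 1]))].
by move=> AL; apply: (A0 _ (AL _)); left.
Qed.

Lemma maximal_unions_not_small : small (Kunion A) -> small (Lunion A) -> False.
Proof.
move=> KAs LAs; have [K0 [L0 AK0L0]] := maximal_has_level.
have [g Ng] := small_not_full KAs; have [h Nh] := small_not_full LAs.
have [mG mG_least] := least_outside_exists (proj1 WG_initial) Ng.
have [mH mH_least] := least_outside_exists (proj1 WH_initial) Nh.
have [rhoG [rhoG_rep rhoG_inj]] :=
  exists_transversal_inj (subgroup_Kunion A_valid AK0L0) G_regular G_uncountable KAs.
have [rhoH [rhoH_rep rhoH_inj]] :=
  exists_transversal_inj (subgroup_Lunion A_valid AK0L0) H_regular H_uncountable LAs.
have [phi [psi [phiK psiK]]] := GH.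
have [B B_valid AB] := exists_proper_extension (proj1 WG_initial) (proj1 WH_initial)
  G_regular G_uncountable H_regular H_uncountable phiK psiK A_valid AK0L0 KAs LAs
  mG_least mH_least rhoG_rep rhoG_inj rhoH_rep rhoH_inj.
exact: A_maximal AB B_valid.
Qed.

Lemma maximal_stage_full : (forall x, Kunion A x) /\ (forall u, Lunion A u).
Proof.
have GH_le := card_eq_le GH; have HG_le := card_eq_le (card_eq_sym GH).
have [[g Ng]|Kfull] := pselect (exists g, ~ Kunion A g).
  have KAs := tower_union_small G_regular WG_initial (tower_levelsl A_valid) Ng.
  by case: (maximal_unions_not_small KAs (small_Lunion A_valid GH_le KAs)).
have [[h Nh]|Lfull] := pselect (exists h, ~ Lunion A h).
  have LAs := tower_union_small H_regular WH_initial (tower_levelsr A_valid) Nh.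
  by case: (maximal_unions_not_small (small_Kunion A_valid HG_le LAs) LAs).
by split=> x; apply: contrapT => Nx; [apply: Kfull|apply: Lfull]; exists x.
Qed.

End Maximal.

Theorem theorem3 (G H : Group) :
  uncountable G -> uncountable H ->
  card_eq G H -> regular_card G ->
  asymorphic (ballean_of_group G) (ballean_of_group H).
Proof.
move=> G_uncountable H_uncountable GH G_regular.
have H_regular := regular_card_eq GH G_regular.
have [WG WG_initial] := exists_initial_ordering G_regular G_uncountable.
have [WH WH_initial] := exists_initial_ordering H_regular H_uncountable.
have [A [A_valid A_maximal]] := Zorn_bigcup (@valid_bigcup G H WG WH).
have [Kfull Lfull] := maximal_stage_full WG_initial WH_initial G_regular G_uncountable
  H_regular H_uncountable GH A_valid A_maximal.
exact: (asymorphic_of_full_stage A_valid G_regular H_regular Kfull Lfull).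
Qed.
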